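(* Let $G$ be a finite group of even order. Then the power graph $\mathscr{G}(G)$ is not overfull.
   Context: For a finite group $G$, the power graph $\mathscr{G}(G)$ is the simple graph with vertex set the elements of $G$, in which two distinct elements $a,b$ are adjacent if and only if one is a power of the other. For a finite simple graph $\Gamma$ on $n$ vertices with maximum vertex degree $\Delta(\Gamma)$, $\Gamma$ is called overfull if $|E(\Gamma)| / \lfloor n/2 \rfloor > \Delta(\Gamma)$. *)

From mathcomp Require Import all_boot all_order all_algebra all_fingroup.
Set Implicit Arguments. Unset Strict Implicit. Unset Printing Implicit Defensive.
Import GRing.Theory Num.Theory.

Definition pg_adj (gT : finGroupType) (a b : gT) : bool :=
  (a != b) && ((a \in cycle b) || (b \in cycle a)).

Definition pg_edges (gT : finGroupType) (G : {set gT}) : {set {set gT}} :=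
  [set e : {set gT} | [exists a in G, exists b in G,
                       pg_adj a b && (e == [set a; b])]].

Definition pg_deg (gT : finGroupType) (G : {set gT}) (x : gT) : nat :=
  #|[set y in G | pg_adj x y]|.

Definition pg_maxdeg (gT : finGroupType) (G : {set gT}) : nat :=
  \max_(x in G) pg_deg G x.

Definition overfull_power_graph (gT : finGroupType) (G : {set gT}) : bool :=
  ((pg_maxdeg G)%:R < (#|pg_edges G|)%:R / ((#|G|)./2)%:R :> rat)%R.

From mathcomp Require Import all_boot all_order all_algebra all_fingroup.
Import Order.TTheory GRing.Theory Num.Theory.
Set Implicit Arguments. Unset Strict Implicit. Unset Printing Implicit Defensive.

(* The identity is a power of every element, so it is adjacent to all other
   vertices and the maximum degree is n - 1.  With n even, floor(n/2) = n/2, and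
   the trivial bound |E| <= n(n-1)/2 = (n/2)(n-1) gives |E| / floor(n/2) <= n - 1. *)

Lemma card_pg_edges_le (gT : finGroupType) (G : {set gT}) :
  #|pg_edges G| <= 'C(#|G|, 2).
Proof.
rewrite -cards_draws; apply/subset_leq_card/subsetP => e.
rewrite !inE => /existsP[a /andP[aG /existsP[b /andP[bG /andP[/andP[ab _] /eqP->]]]]].
rewrite cards2 ab andbT; apply/subsetP => x; rewrite !inE.
by case/orP => /eqP->.
Qed.

Lemma pg_deg1 (gT : finGroupType) (G : {group gT}) : pg_deg G 1%g = #|G|.-1.
Proof.
rewrite /pg_deg (cardsD1 1%g G) group1 /=; apply: eq_card => y.
by rewrite !inE /pg_adj group1 andbT eq_sym andbC.
Qed.

Lemma pg_maxdeg_ge (gT : finGroupType) (G : {group gT}) : #|G|.-1 <= pg_maxdeg G.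
Proof. by rewrite -pg_deg1; apply: (leq_bigmax_cond (F := pg_deg G)). Qed.

Lemma bin2_even n : ~~ odd n -> 'C(n, 2) = n./2 * n.-1.
Proof. by move=> evn; rewrite bin2 -{1}(even_halfK evn) -doubleMl doubleK. Qed.

Lemma ler_natr_div (R : realFieldType) (e h d : nat) :
  e <= h * d -> (e%:R / h%:R <= d%:R :> R)%R.
Proof.
have [->|h_gt0] := posnP h; first by rewrite invr0 mulr0.
by move=> le_e_hd; rewrite ler_pdivrMr ?ltr0n // -natrM ler_nat mulnC.
Qed.

Theorem mainTheorem3 (gT : finGroupType) (G : {group gT}) :
  ~~ odd #|G| -> ~~ overfull_power_graph G.
Proof.
move=> evenG; rewrite /overfull_power_graph -leNgt; apply: ler_natr_div.
apply: leq_trans (card_pg_edges_le G) _.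
by rewrite bin2_even // leq_mul2l pg_maxdeg_ge orbT.
Qed.
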